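(* Let $E$ be a $KB$-space, let $\mathfrak{B}$ be a Boolean subalgebra of $\mathfrak{B}(E)$, let $\xi$ be a forward filtration in $\mathfrak{B}$ and let $T$ be a $\mathfrak{B}$-Volterra operator on $E$. Then for every $k\ge0$: $\iota_{L^k(\xi)}\circ T=\hat{T}_{L^k(\xi)}\circ\iota_{L^k(\xi)}$, $\mathbf{s}\circ\hat{T}_{L^k(\xi)}=\hat{T}_{L^{k+1}(\xi)}\circ\mathbf{s}$ on $\mathcal{M}_b(L^k(\xi))$, and $\mathbf{s}\circ\iota_{L^k(\xi)}=\iota_{L^{k+1}(\xi)}$; all maps are norm continuous operators between Banach lattices. Moreover, if $\hat{T}_\xi\colon\mathcal{M}_b(\xi)\to\mathcal{M}_b(\xi)$ is surjective then $\hat{T}_{L^k(\xi)}$ is open for every $k\ge1$.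
   Context: A $KB$-space is a Banach lattice in which every increasing norm bounded sequence is norm convergent. $\mathfrak{B}(E)$ is the Boolean algebra of all order projections on $E$ ($\pi\le\rho$ iff $\pi\rho=\pi$, zero $\mathbf 0$, unit $\mathbf 1=I_E$). A positive operator $T$ is $\mathfrak{B}$-Volterra if for all $\pi\in\mathfrak{B}$, $x,y\in E$, $\pi x=\pi y$ implies $\pi Tx=\pi Ty$. A forward filtration in $\mathfrak{B}$ is a map $\xi\colon\{0,1,\dots,\infty\}\to\mathfrak{B}$ with $\xi_n\le\xi_{n+1}$, $\xi_0=\mathbf 0$, $\xi_\infty=\mathbf 1$; $L(\xi)_0=\xi_0$, $L(\xi)_n=\xi_{n+1}$ ($n\ge1$), $L^k$ is the $k$-th iterate, $L^0(\xi)=\xi$. $\mathcal{M}_b(\xi)$ is the Banach lattice of sequences $(x_n)_{n\ge1}$ in $E$ with $\xi_nx_m=x_n$ for $m\ge n\ge1$ and $\sup_n\|x_n\|<\infty$ (coordinatewise order, sup norm). $\iota_\xi(x)=(\xi_nx)_{n\ge1}$, $\hat{T}_\xi((x_n))=(\xi_nTx_n)$, $\mathbf{s}((x_n)_{n\ge1})=(x_{n+1})_{n\ge1}$ (mapping $\mathcal{M}_b(\xi)$ to $\mathcal{M}_b(L(\xi))$). *)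

From HB Require Import structures.
From mathcomp Require Import all_boot all_order all_algebra.
From mathcomp Require Import all_classical all_reals all_analysis.
Set Implicit Arguments. Unset Strict Implicit. Unset Printing Implicit Defensive.
Import Order.TTheory GRing.Theory Num.Theory.
Import numFieldNormedType.Exports.
Local Open Scope classical_set_scope.
Local Open Scope ring_scope.

Section Defs.
Variables (R : realType) (E : completeNormedModType R).

Record BanachLattice := {
  le : E -> E -> Prop;
  jn : E -> E -> E;
  le_refl : forall x, le x x;
  le_trans : forall x y z, le x y -> le y z -> le x z;
  le_anti : forall x y, le x y -> le y x -> x = y;
  le_add : forall x y z, le x y -> le (x + z) (y + z);
  le_scale : forall (a : R) x y, 0 <= a -> le x y -> le (a *: x) (a *: y);
  jn_ub1 : forall x y, le x (jn x y);
  jn_ub2 : forall x y, le y (jn x y);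
  jn_least : forall x y z, le x z -> le y z -> le (jn x y) z;
  norm_lattice : forall x y, le (jn x (- x)) (jn y (- y)) -> `|x| <= `|y|
}.

Variable BL : BanachLattice.

Definition KB_space : Prop :=
  forall u : nat -> E, (forall n, le BL (u n) (u n.+1)) ->
    (exists M : R, forall n, `|u n| <= M) -> cvg (u @ \oo).

Definition linop (T : E -> E) : Prop :=
  forall (a : R) x y, T (a *: x + y) = a *: T x + T y.

Definition positive_op (T : E -> E) : Prop :=
  linop T /\ forall x, le BL 0 x -> le BL 0 (T x).

Definition order_projection (P : E -> E) : Prop :=
  linop P /\ (forall x, P (P x) = P x) /\
  (forall x, le BL 0 x -> le BL 0 (P x) /\ le BL (P x) x).

Definition proj_le (pi rho : E -> E) : Prop := forall x, pi (rho x) = pi x.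

(** Boolean subalgebra of B(E): contains 0 and 1 = I, closed under
    meet (composition) and complement (I - pi) (hence under joins). *)
Definition boolean_subalgebra (B : (E -> E) -> Prop) : Prop :=
  (forall pi, B pi -> order_projection pi) /\
  B (fun _ => 0) /\ B id /\
  (forall pi rho, B pi -> B rho -> B (fun x => pi (rho x))) /\
  (forall pi, B pi -> B (fun x => x - pi x)).

Definition volterra (B : (E -> E) -> Prop) (T : E -> E) : Prop :=
  positive_op T /\
  forall pi, B pi -> forall x y, pi x = pi y -> pi (T x) = pi (T y).

(** forward filtration: xi n for n in {0,1,2,...}; xi_oo = 1 is implicit *)
Definition forward_filtration (B : (E -> E) -> Prop) (xi : nat -> E -> E) : Prop :=
  (forall n, B (xi n)) /\ (forall n, proj_le (xi n) (xi n.+1)) /\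
  (forall x, xi 0%N x = 0).

Definition Lshift (xi : nat -> E -> E) : nat -> E -> E :=
  fun n => if n == 0%N then xi 0%N else xi n.+1.

Definition Lk (k : nat) (xi : nat -> E -> E) : nat -> E -> E := iter k Lshift xi.

(** Sequences (x_n)_{n>=1} are encoded as x : nat -> E with x i = x_{i+1}. *)
Definition Mb (xi : nat -> E -> E) (x : nat -> E) : Prop :=
  (forall n m, (n <= m)%N -> xi n.+1 (x m) = x n) /\
  (exists M : R, forall n, `|x n| <= M).

Definition mnorm (x : nat -> E) : R := sup (range (fun n => `|x n|)).

Definition iota_xi (xi : nat -> E -> E) (x : E) : nat -> E := fun n => xi n.+1 x.
Definition That (xi : nat -> E -> E) (T : E -> E) (x : nat -> E) : nat -> E :=
  fun n => xi n.+1 (T (x n)).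
Definition sh (x : nat -> E) : nat -> E := fun n => x n.+1.

Definition seq_linear (P : (nat -> E) -> Prop) (F : (nat -> E) -> (nat -> E)) :=
  forall (a : R) x y, P x -> P y -> F (fun n => a *: x n + y n) = (fun n => a *: F x n + F y n).

Definition cont_EE (T : E -> E) : Prop :=
  forall x (e : R), 0 < e -> exists2 d : R, 0 < d &
    forall y, `|y - x| < d -> `|T y - T x| < e.

Definition cont_EM (F : E -> nat -> E) : Prop :=
  forall x (e : R), 0 < e -> exists2 d : R, 0 < d &
    forall y, `|y - x| < d -> mnorm (fun n => F y n - F x n) < e.

Definition cont_MM (P : (nat -> E) -> Prop) (F : (nat -> E) -> (nat -> E)) : Prop :=
  forall x, P x -> forall (e : R), 0 < e -> exists2 d : R, 0 < d &
    forall y, P y -> mnorm (fun n => y n - x n) < d ->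
      mnorm (fun n => F y n - F x n) < e.

Definition open_MM (P : (nat -> E) -> Prop) (F : (nat -> E) -> (nat -> E)) : Prop :=
  forall x, P x -> forall (e : R), 0 < e -> exists2 d : R, 0 < d &
    forall y, P y -> mnorm (fun n => y n - F x n) < d ->
      exists2 z, P z /\ mnorm (fun n => z n - x n) < e & F z = y.

End Defs.
Arguments sh {R E} x _.

From Pilot Require Import Defs.
From mathcomp Require Import all_boot all_order all_algebra.
From mathcomp Require Import all_classical all_reals all_analysis.
From mathcomp Require Import ring lra zify.
Set Implicit Arguments. Unset Strict Implicit.
Import Order.TTheory GRing.Theory Num.Theory.
Import numFieldNormedType.Exports.
Local Open Scope ring_scope.
Local Open Scope classical_set_scope.

(* Positive operators on a Banach lattice are automatically bounded and order
   projections are contractions, so [T], [iota_xi] and [That] are bounded linear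
   maps and [M_b(xi)] is complete for the sup norm; the intertwining identities
   are the Volterra property [pi T pi = pi T] read coordinatewise.  A preimage
   under [That] for [L^k xi] is read off a preimage for [xi] after shifting the
   indices by [k], so surjectivity passes from [xi] to [L^k xi], and the open
   mapping theorem (Baire category, then successive approximation) makes
   [That] open. *)

Lemma iterated_choice (X : Type) (I : nat -> X -> Prop) (Q : nat -> X -> X -> Prop) (x0 : X) :
  I 0%N x0 -> (forall j x, I j x -> exists y, I j.+1 y /\ Q j x y) ->
  exists u : nat -> X, u 0%N = x0 /\ forall j, I j (u j) /\ Q j (u j) (u j.+1).
Proof.
move=> I0 step.
have /choice[f Hf] (p : nat * X) : exists y, I p.1 p.2 -> I p.1.+1 y /\ Q p.1 p.2 y.
  case: p => j x; have [/step[y Hy]|nIjx] := pselect (I j x); first by exists y.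
  by exists x0 => /nIjx.
pose fix u j := if j is i.+1 then f (i, u i) else x0.
have Iu j : I j (u j) by elim: j => // j IH; exact: (Hf (j, u j) IH).1.
by exists u; split => // j; split => //; exact: (Hf (j, u j) (Iu j)).2.
Qed.

Section Reciprocals.
Variable R : realType.

Definition recip (j : nat) : R := (j.+1%:R)^-1.
Definition recip_gap (j : nat) : R := recip j - recip j.+1.

Lemma recip0 : recip 0 = 1.
Proof. by rewrite /recip invr1. Qed.

Lemma recip_gt0 j : 0 < recip j.
Proof. by rewrite /recip invr_gt0. Qed.

Lemma recip_gap_gt0 j : 0 < recip_gap j.
Proof. by rewrite /recip_gap subr_gt0 /recip ltf_pV2 ?posrE // ltr_nat. Qed.

Lemma recip_gap_le j : recip_gap j <= recip j.
Proof. by rewrite /recip_gap lerBlDr lerDl ltW // recip_gt0. Qed.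

Lemma recip_small (c e : R) : 0 <= c -> 0 < e ->
  exists J, forall j, (J <= j)%N -> c * recip j <= e.
Proof.
move=> c0 e0; exists (Num.Def.truncn (c / e)) => j Jj.
rewrite /recip ler_pdivrMr // mulrC -ler_pdivrMr //.
by apply/ltW/(lt_le_trans (truncnS_gt _)); rewrite ler_nat.
Qed.

End Reciprocals.
Arguments recip {R} j.
Arguments recip_gap {R} j.
Arguments recip0 {R}.
Arguments recip_gt0 {R} j.
Arguments recip_gap_gt0 {R} j.
Arguments recip_gap_le {R} j.

Lemma subr_chain (V : zmodType) (y x z : V) : x - z = (x - y) + (y - z).
Proof. by rewrite addrA subrK. Qed.

Section NormedSubspace.
Variables (R : realType) (V : lmodType R) (P : V -> Prop) (N : V -> R).
Hypothesis P_lin : forall (a : R) x y, P x -> P y -> P (a *: x + y).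
Hypothesis P0 : P 0.
Hypothesis N_triangle : forall x y, P x -> P y -> N (x + y) <= N x + N y.
Hypothesis NZ : forall (a : R) x, P x -> N (a *: x) = `|a| * N x.
Hypothesis N_eq0 : forall x, P x -> N x = 0 -> x = 0.
Hypothesis P_complete : forall u : nat -> V, (forall j, P (u j)) ->
  (forall e, 0 < e -> exists J, forall j m, (J <= j)%N -> (j <= m)%N -> N (u m - u j) <= e) ->
  exists2 v, P v & forall e, 0 < e -> exists J, forall j, (J <= j)%N -> N (v - u j) <= e.

Lemma PD x y : P x -> P y -> P (x + y).
Proof. by move=> Px Py; rewrite -[x]scale1r; apply: P_lin. Qed.

Lemma PZ (a : R) x : P x -> P (a *: x).
Proof. by move=> Px; rewrite -[_ *: _]addr0; apply: P_lin. Qed.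

Lemma PN x : P x -> P (- x).
Proof. by move=> Px; rewrite -scaleN1r; exact: PZ. Qed.

Lemma PB x y : P x -> P y -> P (x - y).
Proof. by move=> Px Py; rewrite -scaleN1r addrC; apply: P_lin. Qed.

Lemma N0 : N 0 = 0.
Proof. by rewrite -(scale0r 0) NZ // normr0 mul0r. Qed.

Lemma NN x : P x -> N (- x) = N x.
Proof. by move=> Px; rewrite -scaleN1r NZ // normrN normr1 mul1r. Qed.

Lemma N_distC x y : P x -> P y -> N (x - y) = N (y - x).
Proof. by move=> Px Py; rewrite -NN ?opprB //; exact: PB. Qed.

Lemma N_ge0 x : P x -> 0 <= N x.
Proof.
move=> Px; have := N_triangle Px (PN Px).
by rewrite addrN N0 NN //; lra.
Qed.

Lemma N_le0_eq0 x : P x -> (forall e, 0 < e -> N x <= e) -> x = 0.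
Proof.
move=> Px small; apply: N_eq0 => //; apply/eqP; rewrite eq_le N_ge0 // andbT.
by apply/ler_addgt0Pr => e e0; rewrite add0r; exact: small.
Qed.

Lemma telescoping_bound (u : nat -> V) (r : nat -> R) :
  (forall j, P (u j)) -> (forall j, N (u j.+1 - u j) <= r j - r j.+1) ->
  forall j m, (j <= m)%N -> N (u m - u j) <= r j - r m.
Proof.
move=> Pu step j m /subnK <-; elim: (m - j)%N => [|k IH].
  by rewrite add0n !subrr N0.
rewrite addSn (subr_chain (u (k + j)%N)).
apply: le_trans (N_triangle (PB (Pu _) (Pu _)) (PB (Pu _) (Pu _))) _.
by have := step (k + j)%N; lra.
Qed.

Lemma telescoping_limit (u : nat -> V) (r : nat -> R) :
  (forall j, P (u j)) -> (forall j, 0 <= r j) -> (forall e, 0 < e -> exists J, r J <= e) ->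
  (forall j, N (u j.+1 - u j) <= r j - r j.+1) ->
  exists2 v, P v & forall j, N (v - u j) <= r j.
Proof.
move=> Pu r_ge0 r_small step; have dist := telescoping_bound Pu step.
have r_nonincr j m : (j <= m)%N -> r m <= r j.
  by move=> jm; have := N_ge0 (PB (Pu m) (Pu j)); have := dist j m jm; lra.
have [v Pv lim_v] : exists2 v, P v & forall e, 0 < e ->
    exists J, forall j, (J <= j)%N -> N (v - u j) <= e.
  apply: P_complete => // e e0; have [J rJ] := r_small e e0.
  exists J => j m Jj jm; have := dist j m jm; have := r_nonincr J j Jj.
  have := r_ge0 m; lra.
exists v => // j; apply/ler_addgt0Pr => e e0.
have [J HJ] := lim_v e e0; pose m := maxn J j.
rewrite (subr_chain (u m)).
apply: le_trans (N_triangle (PB Pv (Pu _)) (PB (Pu _) (Pu _))) _.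
have := HJ m (leq_maxl _ _); have := dist j m (leq_maxr _ _); have := r_ge0 m; lra.
Qed.

Section OpenMapping.
Variable F : V -> V.
Hypothesis F_P : forall x, P x -> P (F x).
Hypothesis F_lin : forall (a : R) x y, P x -> P y -> F (a *: x + y) = a *: F x + F y.
Variable C : R.
Hypothesis C_ge0 : 0 <= C.
Hypothesis F_bounded : forall x, P x -> N (F x) <= C * N x.
Hypothesis F_surj : forall y, P y -> exists2 x, P x & F x = y.

Lemma F0 : F 0 = 0.
Proof.
have := F_lin 1 P0 P0; rewrite !scale1r addr0 => F00.
by apply: (addrI (F 0)); rewrite addr0 -F00.
Qed.

Lemma FD x y : P x -> P y -> F (x + y) = F x + F y.
Proof. by move=> Px Py; have := F_lin 1 Px Py; rewrite !scale1r. Qed.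

Lemma FZ (a : R) x : P x -> F (a *: x) = a *: F x.
Proof. by move=> Px; have := F_lin a Px P0; rewrite !addr0 F0 addr0. Qed.

Lemma FB x y : P x -> P y -> F (x - y) = F x - F y.
Proof. by move=> Px Py; rewrite -scaleN1r addrC F_lin // scaleN1r addrC. Qed.

(* [y] lies in the closure of the image of the ball of radius [rho]. *)
Definition approx_image (rho : R) (y : V) : Prop :=
  forall eps, 0 < eps -> exists x, [/\ P x, N x <= rho & N (F x - y) < eps].

Lemma approx_image0 rho : 0 <= rho -> approx_image rho 0.
Proof. by move=> rho0 eps eps0; exists 0; rewrite F0 subrr N0. Qed.

Lemma approx_imageB a b y y' : P y -> P y' ->
  approx_image a y -> approx_image b y' -> approx_image (a + b) (y - y').
Proof.
move=> Py Py' Ay Ay' eps eps0.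
have [x [Px Nx Fx]] := Ay (eps / 2) (divr_gt0 eps0 (ltr0Sn _ 1)).
have [x' [Px' Nx' Fx']] := Ay' (eps / 2) (divr_gt0 eps0 (ltr0Sn _ 1)).
exists (x - x'); split; first exact: PB.
  by apply: le_trans (N_triangle Px (PN Px')) _; rewrite NN // lerD.
have -> : F (x - x') - (y - y') = (F x - y) - (F x' - y').
  by rewrite FB // !opprB addrACA [RHS]addrACA (addrC (- y)).
have PFy u w : P u -> P w -> P (F u - w) by move=> Pu Pw; apply: PB => //; exact: F_P.
apply: le_lt_trans (N_triangle (PFy _ _ Px Py) (PN (PFy _ _ Px' Py'))) _.
by rewrite NN; [lra | exact: PFy].
Qed.

Lemma approx_imageZ t rho y : 0 < t -> P y ->
  approx_image rho y -> approx_image (t * rho) (t *: y).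
Proof.
move=> t0 Py Ay eps eps0; have [x [Px Nx Fx]] := Ay (eps / t) (divr_gt0 eps0 t0).
exists (t *: x); split; first exact: PZ.
  by rewrite NZ // gtr0_norm // ler_wpM2l // ltW.
rewrite FZ // -scalerBr NZ; last by apply: PB => //; exact: F_P.
by rewrite gtr0_norm // mulrC -ltr_pdivlMr.
Qed.

Lemma shrink_ball rho y0 r s : P y0 -> 0 < r -> 0 < s ->
  ~ (forall y, P y -> N (y - y0) < r -> approx_image rho y) ->
  exists y, exists2 r', [/\ P y, 0 < r', r' <= s & N (y - y0) + r' <= r] &
    forall z, P z -> N (z - y) <= r' -> ~ approx_image rho z.
Proof.
move=> Py0 r0 s0 not_all.
have [y [Py yy0 [eps eps0 far]]] : exists y, [/\ P y, N (y - y0) < r &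
    exists2 eps, 0 < eps & forall x, P x -> N x <= rho -> eps <= N (F x - y)].
  apply: contrapT => none; apply: not_all => y Py yy0 eps eps0.
  apply: contrapT => no_x; apply: none; exists y; split => //; exists eps => // x Px Nx.
  by rewrite leNgt; apply/negP => close; apply: no_x; exists x.
pose r' := Num.min (r - N (y - y0)) (Num.min (eps / 2) s).
have r'0 : 0 < r' by rewrite !lt_min subr_gt0 yy0 divr_gt0.
have [r'_r r'_eps r'_s] : [/\ r' <= r - N (y - y0), r' <= eps / 2 & r' <= s].
  by rewrite /r' !ge_min !lexx !orbT.
exists y, r'; first by split => //; lra.
move=> z Pz zy Az; have [x [Px Nx Fxz]] := Az (eps / 2) (divr_gt0 eps0 (ltr0Sn _ 1)).
have := far x Px Nx; rewrite (subr_chain z).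
have := N_triangle (PB (F_P Px) Pz) (PB Pz Py); lra.
Qed.

(* Baire category: otherwise nested balls with radii tending to [0], the [n]-th
   one avoiding the closure of the image of the [n]-ball, converge to a point
   outside the image of [F]. *)
Lemma approx_image_ball : exists n : nat, exists y0, exists2 r, P y0 /\ 0 < r &
  forall y, P y -> N (y - y0) < r -> approx_image n%:R y.
Proof.
apply: contrapT => no_ball.
pose I (j : nat) (p : V * R) := P p.1 /\ 0 < p.2.
pose Q j (p q : V * R) := [/\ q.2 <= recip j, N (q.1 - p.1) + q.2 <= p.2 &
  forall z, P z -> N (z - q.1) <= q.2 -> ~ approx_image j%:R z].
have step j p : I j p -> exists q, I j.+1 q /\ Q j p q.
  case=> Pp p0.
  have [|y [r' [Py r'0 r'_le yr'] far]] := shrink_ball (rho := j%:R) Pp p0 (recip_gt0 j).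
    by move=> ball; apply: no_ball; exists j, p.1; exists p.2.
  by exists (y, r').
have [u [_ Hu]] := iterated_choice (conj P0 ltr01 : I 0%N (0, 1)) step.
have [z Pz near_z] : exists2 z, P z & forall j, N (z - (u j).1) <= (u j).2.
  apply: telescoping_limit => [j|j|e e0|j].
  - by case: (Hu j) => -[].
  - by case: (Hu j) => -[_ /ltW].
  - have [J HJ] := recip_small (@ler01 R) e0; exists J.+1.
    by case: (Hu J) => _ [+ _ _]; have := HJ J (leqnn _); rewrite mul1r; lra.
  - by case: (Hu j) => _ [_ + _]; lra.
have [x Px Fx] := F_surj Pz.
pose n := (Num.Def.truncn (N x)).+1.
have [_ [_ _ far]] := Hu n.
apply: (far z Pz (near_z n.+1)) => eps eps0.
by exists x; split; [|exact/ltW/truncnS_gt|rewrite Fx subrr N0].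
Qed.

Lemma approx_image_scaled : exists2 K, 0 <= K & forall y, P y -> approx_image (K * N y) y.
Proof.
have [n [y0 [r [Py0 r0] ball]]] := approx_image_ball.
have near0 y : P y -> N y < r -> approx_image (n%:R + n%:R) y.
  move=> Py Ny; have Pyy0 := PD Py Py0.
  have near_y0 : N ((y + y0) - y0) < r by rewrite addrK.
  have at_y0 : N (y0 - y0) < r by rewrite subrr N0.
  by have := approx_imageB Pyy0 Py0 (ball _ Pyy0 near_y0) (ball _ Py0 at_y0); rewrite addrK.
exists ((n + n)%:R * 2 / r); first by rewrite divr_ge0 // ltW.
move=> y Py; have [/(N_eq0 Py)->|Ny0] := eqVneq (N y) 0.
  by rewrite N0 mulr0; exact: approx_image0.
have Nygt0 : 0 < N y by rewrite lt0r Ny0 N_ge0.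
pose t := 2 * N y / r.
have t0 : 0 < t by rewrite divr_gt0 ?mulr_gt0.
have -> : (n + n)%:R * 2 / r * N y = t * (n%:R + n%:R).
  by rewrite /t natrD; field; rewrite gt_eqF.
have yE : y = t *: (t^-1 *: y) by rewrite scalerA mulfV ?scale1r ?lt0r_neq0.
rewrite [X in approx_image _ X]yE.
apply: approx_imageZ => //; first exact: PZ.
apply: near0; first exact: PZ.
rewrite NZ // ger0_norm ?invr_ge0 ?ltW //.
have -> : t^-1 * N y = r / 2 by rewrite /t; field; rewrite !gt_eqF.
lra.
Qed.

(* Successive approximation: correct the residual [w - F s] at every step. *)
Lemma exact_preimage K : 0 <= K -> (forall y, P y -> approx_image (K * N y) y) ->
  forall w d, P w -> 0 < d -> exists x, [/\ P x, F x = w & N x <= K * N w + K * d].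
Proof.
move=> K0 approx w d Pw d0.
have PFB s : P s -> P (w - F s) by move=> Ps; apply: PB => //; exact: F_P.
have [x0 [Px0 Nx0 Fx0]] := approx w Pw _ (mulr_gt0 d0 (recip_gap_gt0 0)).
pose I j s := P s /\ N (w - F s) < d * recip_gap j.
have I0 : I 0%N x0 by split => //; rewrite N_distC //; exact: F_P.
have step j s : I j s -> exists s', I j.+1 s' /\ N (s' - s) <= K * d * recip_gap j.
  case=> Ps ws.
  have [x [Px Nx Fx]] := approx _ (PFB s Ps) _ (mulr_gt0 d0 (recip_gap_gt0 j.+1)).
  exists (s + x); split; first split.
  - exact: PD.
  - by rewrite FD // opprD addrA N_distC //; [exact: PFB | exact: F_P].
  - rewrite addrC addKr; apply: le_trans Nx _.
    by rewrite -mulrA ler_wpM2l // ltW.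
have [s [s0 Hs]] := iterated_choice I0 step.
have Ps j : P (s j) by case: (Hs j) => -[].
have [v Pv near_v] : exists2 v, P v & forall j, N (v - s j) <= K * d * recip j.
  apply: telescoping_limit => [j|j|e e0|j]; first exact: Ps.
  - by apply: mulr_ge0; [apply: mulr_ge0 => //; exact: ltW | exact/ltW/recip_gt0].
  - by have [J HJ] := recip_small (mulr_ge0 K0 (ltW d0)) e0; exists J; apply: HJ.
  - by case: (Hs j) => _; rewrite -mulrBr.
exists v; split => //.
  apply/eqP; rewrite -subr_eq0; apply/eqP/N_le0_eq0 => [|e e0].
    exact: PB (F_P Pv) Pw.
  have [J HJ] := recip_small (addr_ge0 (mulr_ge0 C_ge0 (mulr_ge0 K0 (ltW d0))) (ltW d0)) e0.
  have [[_ wsJ] _] := Hs J.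
  rewrite (subr_chain (F (s J))) -FB //.
  apply: le_trans (N_triangle (F_P (PB Pv (Ps J))) (PB (F_P (Ps J)) Pw)) _.
  have h1 := le_trans (F_bounded (PB Pv (Ps J))) (ler_wpM2l C_ge0 (near_v J)).
  have h2 := ler_wpM2l (ltW d0) (recip_gap_le J).
  rewrite N_distC // in wsJ; last exact: F_P.
  have := HJ J (leqnn _); lra.
rewrite -[v](subrK x0) -s0.
apply: le_trans (N_triangle (PB Pv (Ps 0%N)) (Ps 0%N)) _.
by have := near_v 0%N; rewrite recip0 mulr1 s0; lra.
Qed.

Lemma bounded_preimage : exists2 K, 0 <= K &
  forall w, P w -> exists x, [/\ P x, F x = w & N x <= K * N w].
Proof.
have [K K0 approx] := approx_image_scaled.
exists (K + K); first exact: addr_ge0.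
move=> w Pw; have [/(N_eq0 Pw)->|Nw0] := eqVneq (N w) 0.
  by exists 0; rewrite F0 N0 mulr0.
have [|x [Px Fx Nx]] := exact_preimage K0 approx Pw (d := N w).
  by rewrite lt0r Nw0 N_ge0.
by exists x; rewrite mulrDl.
Qed.

Theorem open_mapping x : P x -> forall e, 0 < e -> exists2 d, 0 < d &
  forall y, P y -> N (y - F x) < d -> exists2 z, P z /\ N (z - x) < e & F z = y.
Proof.
move=> Px e e0; have [K K0 preimage] := bounded_preimage.
have K1 : 0 < K + 1 by rewrite ltr_wpDl.
exists (e / (K + 1)); first exact: divr_gt0.
move=> y Py yFx; have [u [Pu Fu Nu]] := preimage _ (PB Py (F_P Px)).
exists (x + u); last by rewrite FD // Fu addrC subrK.
split; first exact: PD.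
rewrite addrC addKr; apply: le_lt_trans Nu _.
have := ler_wpM2l K0 (ltW yFx); have : e / (K + 1) * (K + 1) = e by rewrite divfK ?gt_eqF.
have := divr_gt0 e0 K1; nra.
Qed.

End OpenMapping.
End NormedSubspace.

Section CompleteNormed.
Variables (R : realType) (E : completeNormedModType R).

Lemma normed_cauchy_limit (u : nat -> E) :
  (forall e : R, 0 < e -> exists J, forall j m, (J <= j)%N -> (j <= m)%N -> `|u m - u j| <= e) ->
  exists v : E, forall e : R, 0 < e -> exists J, forall j, (J <= j)%N -> `|v - u j| <= e.
Proof.
move=> cauchy; have : cauchy_ex (u @ \oo).
  move=> e e0; have [J HJ] := cauchy (e / 2) (divr_gt0 e0 (ltr0Sn _ 1)).
  exists (u J), J => // m /= Jm; rewrite -ball_normE /ball_ /= distrC.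
  by apply: le_lt_trans (HJ J m (leqnn _) Jm) _; rewrite ltr_pdivrMr // ltr_pMr // ltr1n.
move/cauchy_exP/cauchy_cvg/cvg_ex => [v /cvgrPdist_le lim_v]; exists v => e e0.
by have [J _ HJ] := lim_v e e0; exists J.
Qed.

Lemma normed_telescoping_limit (u : nat -> E) (r : nat -> R) :
  (forall j, 0 <= r j) -> (forall e, 0 < e -> exists J, r J <= e) ->
  (forall j, `|u j.+1 - u j| <= r j - r j.+1) -> exists v, forall j, `|v - u j| <= r j.
Proof.
move=> r_ge0 r_small step.
suff [v _ near_v] : exists2 v : E, True & forall j, `|v - u j| <= r j by exists v.
apply: (telescoping_limit (P := fun _ => True) (N := Num.norm)) => //.
- by move=> x y _ _; exact: ler_normD.
- by move=> a x _; exact: normrZ.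
- by move=> w _ /normed_cauchy_limit[v near_v]; exists v.
Qed.

End CompleteNormed.

Section LinearOperators.
Variables (R : realType) (E : completeNormedModType R) (f : E -> E).
Hypothesis f_lin : linop f.

Lemma linopD x y : f (x + y) = f x + f y.
Proof. by have := f_lin 1 x y; rewrite !scale1r. Qed.

Lemma linop0 : f 0 = 0.
Proof. by apply: (addrI (f 0)); rewrite -linopD !addr0. Qed.

Lemma linopZ (a : R) x : f (a *: x) = a *: f x.
Proof. by have := f_lin a x 0; rewrite !addr0 linop0 addr0. Qed.

Lemma linopN x : f (- x) = - f x.
Proof. by rewrite -scaleN1r linopZ scaleN1r. Qed.

Lemma linopB x y : f (x - y) = f x - f y.
Proof. by rewrite linopD linopN. Qed.

End LinearOperators.

Section BanachLatticeFacts.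
Variables (R : realType) (E : completeNormedModType R) (BL : BanachLattice E).
Local Notation le := (le BL).

Definition lat_abs (x : E) : E := jn BL x (- x).

Lemma lat_subr_ge0 x y : le 0 (y - x) <-> le x y.
Proof.
split=> h; first by have := le_add x h; rewrite add0r subrK.
by have := le_add (- x) h; rewrite subrr.
Qed.

Lemma lat_lerN2 x y : le x y -> le (- y) (- x).
Proof. by move=> /lat_subr_ge0 h; apply/lat_subr_ge0; rewrite opprK addrC. Qed.

Lemma lat_lerD x y a b : le x a -> le y b -> le (x + y) (a + b).
Proof.
move=> xa yb; apply: Defs.le_trans (le_add y xa) _.
by rewrite addrC [a + b]addrC; exact: le_add.
Qed.

Lemma lat_abs_ge0 x : le 0 (lat_abs x).
Proof.
have := lat_lerD (jn_ub1 BL x (- x)) (jn_ub2 BL x (- x)); rewrite subrr => h.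
have half : (0 : R) <= 2^-1 by rewrite invr_ge0.
have := le_scale half h.
by rewrite scaler0 scalerDr -scalerDl -div1r -splitr scale1r.
Qed.

Lemma lat_ger0_abs x : le 0 x -> lat_abs x = x.
Proof.
move=> x0; apply: Defs.le_anti; last exact: jn_ub1.
apply: jn_least; first exact: Defs.le_refl.
by have := lat_lerN2 x0; rewrite oppr0 => /Defs.le_trans; apply.
Qed.

Lemma lat_abs_norm_le x y : le (lat_abs x) (lat_abs y) -> `|x| <= `|y|.
Proof. exact: norm_lattice. Qed.

Lemma norm_lat_abs x : `|lat_abs x| = `|x|.
Proof.
have absK : lat_abs (lat_abs x) = lat_abs x by exact/lat_ger0_abs/lat_abs_ge0.
by apply/eqP; rewrite eq_le !lat_abs_norm_le // absK; exact: Defs.le_refl.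
Qed.

Lemma lat_norm_le x y : le 0 x -> le x y -> `|x| <= `|y|.
Proof.
move=> x0 xy; apply: lat_abs_norm_le; rewrite !lat_ger0_abs //.
exact: Defs.le_trans xy.
Qed.

(* The positive cone is norm closed: [(- x) \/ 0] is dominated by [|p - x|]. *)
Lemma lat_ge0_closed x : (forall e : R, 0 < e -> exists p, le 0 p /\ `|p - x| <= e) -> le 0 x.
Proof.
move=> approx; pose m := jn BL (- x) 0.
have m0 : m = 0.
  apply/normr0_eq0/eqP; rewrite eq_le normr_ge0 andbT.
  apply/ler_addgt0Pr => e e0; rewrite add0r; have [p [p0 pe]] := approx e e0.
  apply: le_trans pe; rewrite -norm_lat_abs; apply: lat_norm_le; first exact: jn_ub2.
  apply: jn_least; last exact: lat_abs_ge0.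
  apply: Defs.le_trans (jn_ub1 _ _ _); rewrite -[X in le X _]add0r; exact: le_add.
by have := lat_lerN2 (jn_ub1 BL (- x) 0); rewrite -/m m0 oppr0 opprK.
Qed.

Lemma positive_op_le T x y : positive_op BL T -> le x y -> le (T x) (T y).
Proof. by move=> [T_lin T_pos] /lat_subr_ge0/T_pos; rewrite linopB // => /lat_subr_ge0. Qed.

Lemma lat_abs_le_op T x : positive_op BL T -> le (lat_abs (T x)) (T (lat_abs x)).
Proof.
move=> hT; apply: jn_least; first exact/(positive_op_le hT)/jn_ub1.
by rewrite -(linopN hT.1); exact/(positive_op_le hT)/jn_ub2.
Qed.

Lemma positive_op_norm_abs T x : positive_op BL T -> `|T x| <= `|T (lat_abs x)|.
Proof.
move=> hT; apply: lat_abs_norm_le.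
rewrite [X in le _ X]lat_ger0_abs; first exact: lat_abs_le_op.
by case: hT => _; apply; exact: lat_abs_ge0.
Qed.

Lemma order_projection_contr pi x : order_projection BL pi -> `|pi x| <= `|x|.
Proof.
move=> [pi_lin [_ pi_le]]; apply: lat_abs_norm_le.
have pi_pos : positive_op BL pi by split => // y /pi_le[].
apply: Defs.le_trans (lat_abs_le_op x pi_pos) _.
by have [] := pi_le _ (lat_abs_ge0 x).
Qed.

Lemma lat_le_partial_sum (x : nat -> E) : (forall i, le 0 (x i)) ->
  forall n m, (n < m)%N -> le (x n) (\sum_(0 <= i < m) x i).
Proof.
move=> x_ge0 n; elim=> // m IH; rewrite ltnS leq_eqVlt big_nat_recr //=.
case/orP=> [/eqP->|/IH xn]; last by rewrite -[x n]addr0; exact: lat_lerD.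
rewrite -{1}[x m]add0r; apply: lat_lerD (Defs.le_refl _ _).
apply: big_ind => //; first exact: Defs.le_refl.
by move=> a b a0 b0; rewrite -[0]addr0; exact: lat_lerD.
Qed.

Lemma positive_op_unbounded_witness T : positive_op BL T ->
  ~ (exists C : R, forall p, le 0 p -> `|T p| <= C * `|p|) ->
  forall M c : R, 0 < c -> exists p, [/\ le 0 p, `|p| = c & M < `|T p|].
Proof.
move=> hT unbounded M c c0.
have [p [p0 Tp]] : exists p, le 0 p /\ M / c * `|p| < `|T p|.
  apply: contrapT => none; apply: unbounded; exists (M / c) => p p0.
  by rewrite leNgt; apply/negP => Tp; apply: none; exists p.
have p_gt0 : 0 < `|p|.
  rewrite normr_gt0; apply/negP => /eqP p_eq0.
  by move: Tp; rewrite p_eq0 linop0 ?normr0 ?mulr0 ?ltxx //; case: hT.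
have k0 : 0 < c / `|p| by exact: divr_gt0.
exists ((c / `|p|) *: p); split.
- by have := le_scale (ltW k0) p0; rewrite scaler0.
- by rewrite normrZ gtr0_norm // divfK ?gt_eqF.
- rewrite linopZ; last by case: hT.
  have -> : M = c / `|p| * (M / c * `|p|) by field; rewrite !lt0r_neq0.
  by rewrite normrZ gtr0_norm // ltr_pM2l.
Qed.

(* Automatic continuity: if [T] were unbounded on the cone, pick [x n >= 0]
   with [|x n|] summable and [|T (x n)| > n]; then [x n <= s := \sum x] forces
   [|T s| > n] for all [n]. *)
Lemma positive_op_bounded T : positive_op BL T -> exists C : R, forall x, `|T x| <= C * `|x|.
Proof.
move=> hT; suff [C HC] : exists C : R, forall p, le 0 p -> `|T p| <= C * `|p|.
  exists C => x; apply: le_trans (positive_op_norm_abs x hT) _.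
  by rewrite -(norm_lat_abs x); exact/HC/lat_abs_ge0.
apply: contrapT => unbounded.
have /choice[x Hx] (n : nat) : exists p, [/\ le 0 p, `|p| = recip_gap n & n%:R < `|T p|].
  exact: positive_op_unbounded_witness (recip_gap_gt0 n).
have x_ge0 n : le 0 (x n) by case: (Hx n).
pose S m := \sum_(0 <= i < m) x i.
have [s near_s] : exists s, forall m, `|s - S m| <= recip m.
  apply: normed_telescoping_limit => [m|e e0|m]; first exact/ltW/recip_gt0.
    have [J HJ] := recip_small (@ler01 R) e0.
    by exists J; have := HJ J (leqnn _); rewrite mul1r.
  by rewrite /S big_nat_recr //= addrAC subrr add0r; case: (Hx m) => _ -> _.
have x_le_s n : le (x n) s.
  apply/lat_subr_ge0/lat_ge0_closed => e e0.
  have [J HJ] := recip_small (@ler01 R) e0; pose m := maxn J n.+1.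
  exists (S m - x n); split.
    exact/lat_subr_ge0/lat_le_partial_sum/leq_maxr.
  rewrite opprB -subr_chain distrC.
  by apply: le_trans (near_s m) _; rewrite -[recip m]mul1r; exact/HJ/leq_maxl.
pose n := (Num.Def.truncn `|T s|).+1.
have [_ _ Txn] := Hx n.
have := lt_le_trans Txn (lat_norm_le (hT.2 _ (x_ge0 n)) (positive_op_le hT (x_le_s n))).
by rewrite ltNge => /negP; apply; exact/ltW/truncnS_gt.
Qed.

End BanachLatticeFacts.

Section SupNorm.
Variables (R : realType) (E : completeNormedModType R).
Implicit Types x y : nat -> E.

Definition bounded_seq x := exists M : R, forall n, `|x n| <= M.

Lemma mnorm_ub x n : bounded_seq x -> `|x n| <= mnorm x.
Proof. by move=> [M HM]; apply: ub_le_sup; [exists M => _ [m _ <-] | exists n]. Qed.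

Lemma mnorm_le x (M : R) : (forall n, `|x n| <= M) -> mnorm x <= M.
Proof. by move=> HM; apply: ge_sup; [exists `|x 0%N|, 0%N | move=> _ [m _ <-]]. Qed.

Lemma mnorm_ge0 x : bounded_seq x -> 0 <= mnorm x.
Proof. by move=> bx; apply: le_trans (mnorm_ub 0 bx). Qed.

Lemma bounded_seqD (a : R) x y : bounded_seq x -> bounded_seq y ->
  bounded_seq (fun n => a *: x n + y n).
Proof.
move=> [M1 h1] [M2 h2]; exists (`|a| * M1 + M2) => n.
by apply: le_trans (ler_normD _ _) _; rewrite normrZ lerD // ler_wpM2l.
Qed.

Lemma bounded_seqB x y : bounded_seq x -> bounded_seq y -> bounded_seq (fun n => x n - y n).
Proof.
move=> bx by_; have [M HM] := bounded_seqD (-1) by_ bx; exists M => n.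
by have := HM n; rewrite scaleN1r addrC.
Qed.

Lemma mnormD x y : bounded_seq x -> bounded_seq y ->
  mnorm (fun n => x n + y n) <= mnorm x + mnorm y.
Proof.
move=> bx by_; apply: mnorm_le => n; apply: le_trans (ler_normD _ _) _.
by apply: lerD; exact: mnorm_ub.
Qed.

Lemma mnormZ (a : R) x : bounded_seq x -> mnorm (fun n => a *: x n) = `|a| * mnorm x.
Proof.
move=> bx; apply/eqP; rewrite eq_le; apply/andP; split.
  by apply: mnorm_le => n; rewrite normrZ ler_wpM2l // mnorm_ub.
have [->|a0] := eqVneq a 0.
  by rewrite normr0 mul0r; apply: mnorm_ge0; exists 0 => n; rewrite scale0r normr0.
rewrite -ler_pdivlMl ?normr_gt0 //; apply: mnorm_le => n.
rewrite ler_pdivlMl ?normr_gt0 // -normrZ; apply: mnorm_ub.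
by have [M HM] := bx; exists (`|a| * M) => m; rewrite normrZ ler_wpM2l.
Qed.

Lemma mnorm_eq0 x : bounded_seq x -> mnorm x = 0 -> x = 0.
Proof.
move=> bx x0; apply: funext => n; apply/normr0_eq0/eqP.
by rewrite eq_le normr_ge0 andbT -x0 mnorm_ub.
Qed.

Lemma sup_cauchy_limit (u : nat -> nat -> E) : (forall j, bounded_seq (u j)) ->
  (forall e, 0 < e -> exists J, forall j m, (J <= j)%N -> (j <= m)%N -> mnorm (u m - u j) <= e) ->
  exists2 v, bounded_seq v &
    forall e, 0 < e -> exists J, forall j n, (J <= j)%N -> `|v n - u j n| <= e.
Proof.
move=> bu cauchy; have diff j m n : `|u m n - u j n| <= mnorm (u m - u j).
  exact/mnorm_ub/bounded_seqB.
have /choice[v lim_v] n : exists v, forall e, 0 < e ->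
    exists J, forall j, (J <= j)%N -> `|v - u j n| <= e.
  apply: normed_cauchy_limit => e e0; have [J HJ] := cauchy e e0.
  by exists J => j m Jj jm; apply: le_trans (HJ j m Jj jm).
have unif e : 0 < e -> exists J, forall j n, (J <= j)%N -> `|v n - u j n| <= e.
  move=> e0; have [J HJ] := cauchy e e0; exists J => j n Jj.
  apply/ler_addgt0Pr => eta eta0; have [J' HJ'] := lim_v n eta eta0.
  pose m := maxn J' j; rewrite (subr_chain (u m n)) addrC.
  apply: le_trans (ler_normD _ _) _; apply: lerD; last exact/HJ'/leq_maxl.
  exact: le_trans (diff _ _ n) (HJ j m Jj (leq_maxr _ _)).
exists v => //; have [J HJ] := unif 1 ltr01; have [M HM] := bu J.
exists (1 + M) => n; rewrite -[v n](subrK (u J n)).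
by apply: le_trans (ler_normD _ _) _; rewrite lerD // HJ.
Qed.

End SupNorm.

Section Filtrations.
Variables (R : realType) (E : completeNormedModType R) (BL : BanachLattice E).
Variable B : (E -> E) -> Prop.
Hypothesis hB : boolean_subalgebra BL B.
Implicit Types z : nat -> E -> E.

Lemma forward_filtration_Lshift z : forward_filtration B z -> forward_filtration B (Lshift z).
Proof.
move=> [zB [z_le z0]]; split; first by case=> [|n]; exact: zB.
split; last exact: z0.
by case=> [|n] x; rewrite /Lshift /= ?z0 //; exact: z_le.
Qed.

Lemma forward_filtration_Lk k z : forward_filtration B z -> forward_filtration B (Lk k z).
Proof. by move=> hz; elim: k => //= k; exact: forward_filtration_Lshift. Qed.

Lemma Lk_succ k z n : Lk k z n.+1 = z (n.+1 + k)%N.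
Proof.
elim: k n => [|k IH] n; first by rewrite addn0.
by rewrite /Lk iterS -/(Lk k z) /Lshift /= IH addSnnS.
Qed.

Lemma sh_Mb z x : Mb z x -> Mb (Lshift z) (sh x).
Proof.
case=> x_compat [M HM]; split; first by move=> n m nm; exact: (x_compat n.+1 m.+1).
by exists M => n; exact: HM.
Qed.

Lemma sh_cont z : cont_MM (Mb z) sh.
Proof.
move=> x [_ bx] e e0; exists e => // y [_ by_]; apply: le_lt_trans; apply: mnorm_le => n.
exact/(mnorm_ub n.+1)/bounded_seqB.
Qed.

Section Filtration.
Variable z : nat -> E -> E.
Hypothesis hz : forward_filtration B z.

Lemma filt_proj n : order_projection BL (z n).
Proof. by case: hB => + _; apply; case: hz. Qed.

Lemma filt_linop n : linop (z n).
Proof. by case: (filt_proj n). Qed.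

Lemma filt_contr n x : `|z n x| <= `|x|.
Proof. exact/order_projection_contr/filt_proj. Qed.

Lemma filt_absorb a b x : (a <= b)%N -> z a (z b x) = z a x.
Proof.
move=> /subnK <-; elim: (b - a)%N x => [|k IH] x.
  by case: (filt_proj a) => _ [].
by case: hz => _ [z_le _]; rewrite addSn -IH z_le IH.
Qed.

Lemma Mb_bounded x : Mb z x -> bounded_seq x.
Proof. by case. Qed.

Lemma Mb0 : Mb z 0.
Proof. by split=> [n m _|]; [exact: linop0 (filt_linop _) | exists 0 => n; rewrite normr0]. Qed.

Lemma Mb_lin (a : R) x y : Mb z x -> Mb z y -> Mb z (fun n => a *: x n + y n).
Proof.
move=> [x_compat bx] [y_compat by_]; split; last exact: bounded_seqD.
by move=> n m nm; rewrite filt_linop x_compat ?y_compat.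
Qed.

Lemma Mb_complete (u : nat -> nat -> E) : (forall j, Mb z (u j)) ->
  (forall e, 0 < e -> exists J, forall j m, (J <= j)%N -> (j <= m)%N -> mnorm (u m - u j) <= e) ->
  exists2 v, Mb z v & forall e, 0 < e -> exists J, forall j, (J <= j)%N -> mnorm (v - u j) <= e.
Proof.
move=> Mu cauchy; have [v bv unif] := sup_cauchy_limit (fun j => Mb_bounded (Mu j)) cauchy.
exists v; last first.
  by move=> e e0; have [J HJ] := unif e e0; exists J => j Jj; apply: mnorm_le => n; exact: HJ.
split=> // n m nm; apply/eqP; rewrite -subr_eq0 -normr_eq0 eq_le normr_ge0 andbT.
apply/ler_addgt0Pr => e e0; rewrite add0r.
have [J HJ] := unif (e / 2) (divr_gt0 e0 (ltr0Sn _ 1)); have [u_compat _] := Mu J.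
rewrite (subr_chain (u J n)) -{1}(u_compat n m nm) -(linopB (filt_linop n.+1)).
apply: le_trans (ler_normD _ _) _.
have := le_trans (filt_contr n.+1 _) (HJ J m (leqnn _)); have := HJ J n (leqnn _).
rewrite distrC; lra.
Qed.

End Filtration.

(* A preimage for [L^k xi] is read off a preimage for [xi] of the sequence
   [(xi_(j+1) y_(j-k))_j], shifted back by [k]. *)
Lemma That_surj_Lk (T : E -> E) xi k : forward_filtration B xi ->
  (forall y, Mb xi y -> exists2 x, Mb xi x & That xi T x = y) ->
  forall y, Mb (Lk k xi) y -> exists2 x, Mb (Lk k xi) x & That (Lk k xi) T x = y.
Proof.
move=> hxi surj y [y_compat [M HM]].
have y_compat' n m : (n <= m)%N -> xi (n.+1 + k)%N (y m) = y n.
  by move=> nm; rewrite -Lk_succ; exact: y_compat.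
pose y' j := xi j.+1 (y (j - k)%N).
have My' : Mb xi y'.
  split; last by exists M => j; apply: le_trans (filt_contr hxi _ _) (HM _).
  move=> n m nm; rewrite /y' (filt_absorb hxi) //.
  rewrite -(y_compat' (n - k)%N (m - k)%N) ?leq_sub2r // (filt_absorb hxi) //; lia.
have [x' [x'_compat [M' HM']] Hx'] := surj y' My'.
exists (fun n => x' (n + k)%N).
  split; last by exists M' => n; exact: HM'.
  by move=> n m nm; rewrite Lk_succ addSn; apply: x'_compat; rewrite leq_add2r.
apply: funext => n; rewrite /That Lk_succ addSn.
have := congr1 (fun f => f (n + k)%N) Hx'; rewrite /That /= => ->.
by rewrite /y' addnK -addSn y_compat'.
Qed.

End Filtrations.

Section VolterraOperator.
Variables (R : realType) (E : completeNormedModType R) (BL : BanachLattice E).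
Variables (B : (E -> E) -> Prop) (T : E -> E).
Hypothesis hB : boolean_subalgebra BL B.
Hypothesis T_pos : positive_op BL T.
Hypothesis T_volterra : forall pi, B pi -> forall x y, pi x = pi y -> pi (T x) = pi (T y).
Variable C : R.
Hypothesis C_ge0 : 0 <= C.
Hypothesis T_bounded : forall x, `|T x| <= C * `|x|.

Lemma lipschitz_delta e : 0 < e -> exists2 d, 0 < d & forall t, 0 <= t -> t < d -> C * t < e.
Proof.
move=> e0; exists (e / (C + 1)) => [|t t0]; first by rewrite divr_gt0 // ltr_wpDl.
rewrite ltr_pdivlMr ?ltr_wpDl //; nra.
Qed.

Lemma T_cont : cont_EE T.
Proof.
move=> x e /lipschitz_delta[d d0 Hd]; exists d => // y yx.
by rewrite -(linopB T_pos.1); exact: le_lt_trans (T_bounded _) (Hd _ (normr_ge0 _) yx).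
Qed.

Section Filtration.
Variable z : nat -> E -> E.
Hypothesis hz : forward_filtration B z.

Lemma iota_xiT x : iota_xi z (T x) = That z T (iota_xi z x).
Proof.
apply: funext => n; apply: T_volterra; first by case: hz.
by rewrite /iota_xi (filt_absorb hB hz).
Qed.

Lemma iota_xi_Mb x : Mb z (iota_xi z x).
Proof.
split; first by move=> n m nm; rewrite /iota_xi (filt_absorb hB hz).
by exists `|x| => n; exact: (filt_contr hB hz).
Qed.

Lemma iota_xi_lin (a : R) x y :
  iota_xi z (a *: x + y) = (fun n => a *: iota_xi z x n + iota_xi z y n).
Proof. by apply: funext => n; rewrite /iota_xi (filt_linop hB hz). Qed.

Lemma iota_xi_cont : cont_EM (iota_xi z).
Proof.
move=> x e e0; exists e => // y; apply: le_lt_trans; apply: mnorm_le => n.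
by rewrite /iota_xi -(linopB (filt_linop hB hz n.+1)) (filt_contr hB hz).
Qed.

Lemma That_Mb x : Mb z x -> Mb z (That z T x).
Proof.
move=> [x_compat [M HM]]; split.
  move=> n m nm; rewrite /That (filt_absorb hB hz) //; apply: T_volterra; first by case: hz.
  by rewrite -(x_compat n m nm) (filt_absorb hB hz).
exists (C * M) => n; apply: le_trans (filt_contr hB hz _ _) _.
exact: le_trans (T_bounded _) (ler_wpM2l C_ge0 (HM n)).
Qed.

Lemma That_lin : seq_linear (Mb z) (That z T).
Proof. by move=> a x y _ _; apply: funext => n; rewrite /That T_pos.1 (filt_linop hB hz). Qed.

Lemma That_mnorm_le x : Mb z x -> mnorm (That z T x) <= C * mnorm x.
Proof.
move=> [_ bx]; apply: mnorm_le => n; apply: le_trans (filt_contr hB hz _ _) _.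
exact: le_trans (T_bounded _) (ler_wpM2l C_ge0 (mnorm_ub n bx)).
Qed.

Lemma That_lipschitz x y : Mb z x -> Mb z y ->
  mnorm (fun n => That z T y n - That z T x n) <= C * mnorm (fun n => y n - x n).
Proof.
move=> [_ bx] [_ by_]; apply: mnorm_le => n.
rewrite /That -(linopB (filt_linop hB hz n.+1)) -(linopB T_pos.1).
apply: le_trans (filt_contr hB hz _ _) _; apply: le_trans (T_bounded _) _.
exact/ler_wpM2l/mnorm_ub/bounded_seqB.
Qed.

Lemma That_cont : cont_MM (Mb z) (That z T).
Proof.
move=> x Mx e /lipschitz_delta[d d0 Hd]; exists d => // y My yx.
have bxy := bounded_seqB (Mb_bounded My) (Mb_bounded Mx).
exact: le_lt_trans (That_lipschitz Mx My) (Hd _ (mnorm_ge0 bxy) yx).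
Qed.

Lemma That_open : (forall y, Mb z y -> exists2 x, Mb z x & That z T x = y) ->
  open_MM (Mb z) (That z T).
Proof.
move=> surj x Mx e e0.
apply: (open_mapping (P := Mb z) (N := @mnorm R E) _ (Mb0 hB hz) _ _ _ (Mb_complete hB hz)
  That_Mb That_lin C_ge0 That_mnorm_le surj Mx e0).
- by move=> a u v Mu Mv; exact: (Mb_lin hB hz a Mu Mv).
- by move=> u v Mu Mv; exact: (mnormD (Mb_bounded Mu) (Mb_bounded Mv)).
- by move=> a u Mu; exact: (mnormZ a (Mb_bounded Mu)).
- by move=> u Mu; exact: (mnorm_eq0 (Mb_bounded Mu)).
Qed.

End Filtration.
End VolterraOperator.

Unset Implicit Arguments. Set Strict Implicit.

Theorem corollary4p7 (R : realType) (E : completeNormedModType R)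
  (BL : BanachLattice E) (B : (E -> E) -> Prop) (xi : nat -> E -> E) (T : E -> E) :
  KB_space BL -> boolean_subalgebra BL B -> forward_filtration B xi ->
  volterra BL B T ->
  (forall k : nat,
     (forall x, iota_xi (Lk k xi) (T x) = That (Lk k xi) T (iota_xi (Lk k xi) x)) /\
     (forall x, Mb (Lk k xi) x ->
        sh (That (Lk k xi) T x) = That (Lk k.+1 xi) T (sh x)) /\
     (forall x, sh (iota_xi (Lk k xi) x) = iota_xi (Lk k.+1 xi) x) /\
     (* all maps are norm continuous operators between the spaces involved *)
     (linop T /\ cont_EE T) /\
     ((forall x, Mb (Lk k xi) (iota_xi (Lk k xi) x)) /\
      (forall (a : R) x y, iota_xi (Lk k xi) (a *: x + y)
                         = (fun n => a *: iota_xi (Lk k xi) x n + iota_xi (Lk k xi) y n)) /\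
      cont_EM (iota_xi (Lk k xi))) /\
     ((forall x, Mb (Lk k xi) x -> Mb (Lk k xi) (That (Lk k xi) T x)) /\
      seq_linear (Mb (Lk k xi)) (That (Lk k xi) T) /\
      cont_MM (Mb (Lk k xi)) (That (Lk k xi) T)) /\
     ((forall x, Mb (Lk k xi) x -> Mb (Lk k.+1 xi) (sh x)) /\
      seq_linear (Mb (Lk k xi)) sh /\
      cont_MM (Mb (Lk k xi)) sh)) /\
  ((forall y, Mb xi y -> exists2 x, Mb xi x & That xi T x = y) ->
   forall k : nat, (1 <= k)%N -> open_MM (Mb (Lk k xi)) (That (Lk k xi) T)).
Proof.
move=> _ hB hxi [T_pos T_volterra].
have [C0 HC0] := positive_op_bounded T_pos.
have HC x : `|T x| <= `|C0| * `|x| by apply: le_trans (HC0 x) (ler_wpM2r _ (ler_norm _)).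
have C_ge0 := normr_ge0 C0.
split=> [k|surj k _]; last first.
  apply: (That_open hB T_pos T_volterra C_ge0 HC (forward_filtration_Lk k hxi)).
  exact (That_surj_Lk (k:=k) hB hxi surj).
have hz := forward_filtration_Lk k hxi.
split; first exact: (iota_xiT hB T_volterra hz).
split; first by [].
split; first by [].
split; first by split; [exact: T_pos.1 | exact: (T_cont T_pos C_ge0 HC)].
split; first by split; [|split]; [exact: (iota_xi_Mb hB hz) | exact: (iota_xi_lin hB hz)
  | exact: (iota_xi_cont hB hz)].
split; first by split; [|split]; [exact: (That_Mb hB T_volterra C_ge0 HC hz)
  | exact: (That_lin hB T_pos hz) | exact: (That_cont hB T_pos C_ge0 HC hz)].
by split; [|split]; [exact: sh_Mb | by [] | exact: sh_cont].
Qed.
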